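(* Let $X$ be a $T_1$ space and $\mathcal{P}$ an ideal of closed subsets of $X$ containing every singleton subset of $X$. Then $C(X)_\mathcal{P}$ is an Artinian ring if and only if $X$ is finite.
   Context: An ideal of closed subsets of $X$ is a family $\mathcal{P}$ of closed subsets closed under finite unions and under passing to closed subsets. $D_f$ is the set of discontinuity points of $f\in\mathbb{R}^X$; $C(X)_\mathcal{P}=\{f\in\mathbb{R}^X\colon\overline{D_f}\in\mathcal{P}\}$ with pointwise operations. *)

From HB Require Import structures.
From mathcomp Require Import all_boot all_order all_algebra.
From mathcomp Require Import all_classical all_reals all_analysis.
Set Implicit Arguments. Unset Strict Implicit. Unset Printing Implicit Defensive.
Import Order.TTheory GRing.Theory Num.Theory.
Import numFieldNormedType.Exports.
Local Open Scope classical_set_scope.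
Local Open Scope ring_scope.

Definition closed_ideal {X : topologicalType} (P : set (set X)) : Prop :=
  [/\ forall A, P A -> closed A,
      P set0,
      forall A B, P A -> P B -> P (A `|` B)
    & forall A B, P A -> closed B -> B `<=` A -> P B].

Definition discont {X : topologicalType} {R : realType} (f : X -> R) : set X :=
  [set x : X | ~ (f @ x --> f x)].

(* C(X)_P as a subset of R^X (with pointwise operations) *)
Definition CP {X : topologicalType} {R : realType} (P : set (set X)) : set (X -> R) :=
  [set f | P (closure (discont f))].

Definition CP_ideal {X : topologicalType} {R : realType} (P : set (set X))
    (I : set (X -> R)) : Prop :=
  [/\ I `<=` CP P,
      I (fun _ => 0),
      forall f g, I f -> I g -> I (f \+ g),
      forall f, I f -> I (fun x => - f x)
    & forall f g, CP P g -> I f -> I (g \* f)].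

Definition CP_artinian {X : topologicalType} {R : realType} (P : set (set X)) : Prop :=
  forall I : nat -> set (X -> R),
    (forall n, CP_ideal P (I n)) ->
    (forall n, I n.+1 `<=` I n) ->
    exists N, forall n, (N <= n)%N -> I n = I N.

From HB Require Import structures.
From mathcomp Require Import all_boot all_order all_algebra.
From mathcomp Require Import all_classical all_reals all_analysis.
From mathcomp Require Import finmap.
Import Order.TTheory GRing.Theory Num.Theory.
Import numFieldNormedType.Exports.
Local Open Scope classical_set_scope.
Local Open Scope ring_scope.

(* For an ideal J of C(X)_P, let supp J be the set of points where some member
   of J does not vanish.  In a T_1 space every function supported on a single
   point a is continuous off a, hence lies in C(X)_P; multiplying by these
   spikes shows that J contains every finitely supported f with
   {f <> 0} included in supp J.  If X is finite, a descending chain of ideals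
   therefore stabilises as soon as the chain of their supports does, which
   happens because the supports are subsets of a finite set.  If X is infinite,
   pick distinct points x_0, x_1, ...: the ideals of functions vanishing at
   x_0, ..., x_(n-1) form a strictly descending chain, as the spike at x_n
   separates the n-th ideal from the next one. *)

Lemma nat_seq_minimizer (u : nat -> nat) : exists N, forall n, (u N <= u n)%N.
Proof.
have exu : exists k, `[< exists n, u n = k >].
  by exists (u 0%N); apply/asboolP; exists 0%N.
case: (ex_minnP exu) => _ /asboolP[N <-] minu.
by exists N => n; apply/minu/asboolP; exists n.
Qed.

Lemma nonincreasing_setS {T : Type} {S : nat -> set T} :
  (forall n, S n.+1 `<=` S n) -> {homo S : m n / (m <= n)%N >-> n `<=` m}.
Proof.
apply: homo_leq => [A|B A C AB BC]; first exact: subset_refl.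
exact: subset_trans BC AB.
Qed.

Lemma finite_nonincreasing_set_stable {T : choiceType} {S : nat -> set T} :
  finite_set [set: T] -> (forall n, S n.+1 `<=` S n) ->
  exists N, forall n, (N <= n)%N -> S n = S N.
Proof.
move=> finT decS.
have finS n : finite_set (S n) := sub_finite_set (subsetT _) finT.
have [N minN] := nat_seq_minimizer (fun n => #|` fset_set (S n)|%fset).
exists N => n Nn; apply: fset_set_inj => //; apply/eqP.
have SnN : (fset_set (S n) `<=` fset_set (S N))%fset.
  by rewrite -fset_set_sub //; exact: (nonincreasing_setS decS _ _ Nn).
by rewrite -(fsubset_leqif_cards SnN).2 eqn_leq minN fsubset_leq_card.
Qed.

Lemma infinite_setT_fresh {T : eqType} (s : seq T) :
  infinite_set [set: T] -> exists x, x \notin s.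
Proof.
move=> infT; apply: contrapT => /forallNP sT; apply: infT.
apply: sub_finite_set (finite_seq s) => x _ /=.
by apply/negPn/negP; exact: sT.
Qed.

Section Discontinuities.
Context {R : realType} {X : topologicalType}.
Implicit Types f g : X -> R.

Lemma discontD f g : discont (f \+ g) `<=` discont f `|` discont g.
Proof.
move=> x /= fgx; apply: contrapT => /not_orP[/contrapT fx /contrapT gx].
by apply: fgx; exact: cvgD fx gx.
Qed.

Lemma discontN f : discont (fun x => - f x) `<=` discont f.
Proof. by move=> x /= fx gx; apply: fx; exact: cvgN gx. Qed.

Lemma discontM f g : discont (f \* g) `<=` discont f `|` discont g.
Proof.
move=> x /= fgx; apply: contrapT => /not_orP[/contrapT fx /contrapT gx].
by apply: fgx; exact: cvgM fx gx.
Qed.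

Lemma discont_cst (c : R) : discont (fun _ : X => c) = set0.
Proof. by apply/seteqP; split => // x /=; apply; exact: cvg_cst. Qed.

Definition spike (a : X) (c : R) : X -> R := fun x => if x == a then c else 0.

Lemma discont_spike (a : X) (c : R) :
  accessible_space X -> discont (spike a c) `<=` [set a].
Proof.
move=> acc x /= xdisc; apply/eqP; apply: contraPT xdisc => xa; apply.
have nbx : nbhs x (~` [set a]).
  apply: open_nbhs_nbhs; split; last exact/eqP.
  by rewrite openC; exact: accessible_closed_set1.
apply: cvg_near_cst; apply: filterS nbx => y /eqP ya.
by rewrite /spike (negbTE ya) (negbTE xa).
Qed.

End Discontinuities.

Section IdealsOfCP.
Context {R : realType} {X : topologicalType} (P : set (set X)).
Hypothesis idealP : closed_ideal P.
Implicit Types (f g : X -> R) (A : set X).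

Lemma CP_discont_sub {A f} : P A -> discont f `<=` A -> @CP X R P f.
Proof.
case: idealP => Pclosed _ _ Psub PA fA; apply: (Psub A) => //.
  exact: closed_closure.
by rewrite closureE; apply: smallest_sub => //; exact: Pclosed.
Qed.

Lemma CP0 : CP P (fun _ : X => 0 : R).
Proof.
by case: idealP => _ P0 _ _; apply: CP_discont_sub P0 _; rewrite discont_cst.
Qed.

Lemma CP_discontU {f g h} : discont h `<=` discont f `|` discont g ->
  CP P f -> CP P g -> @CP X R P h.
Proof.
case: idealP => _ _ PU _ hfg Pf Pg; apply: CP_discont_sub (PU _ _ Pf Pg) _.
exact: subset_trans hfg (setUSS (@subset_closure _ _) (@subset_closure _ _)).
Qed.

Lemma CPD f g : CP P f -> CP P g -> CP P (f \+ g).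
Proof. exact/CP_discontU/discontD. Qed.

Lemma CPN f : CP P f -> CP P (fun x => - f x).
Proof.
move=> Pf; apply: (CP_discontU _ Pf Pf).
exact: subset_trans (discontN f) (@subsetUl _ _ _).
Qed.

Lemma CPM f g : CP P f -> CP P g -> CP P (f \* g).
Proof. exact/CP_discontU/discontM. Qed.

Hypothesis accX : accessible_space X.
Hypothesis P_set1 : forall x : X, P [set x].

Lemma CP_spike (a : X) (c : R) : CP P (spike a c).
Proof. exact: CP_discont_sub (P_set1 a) (discont_spike a c accX). Qed.

Definition vanishing_ideal A : set (X -> R) :=
  [set f | CP P f /\ forall x, A x -> f x = 0].

Lemma vanishing_ideal_CP_ideal A : CP_ideal P (vanishing_ideal A).
Proof.
split.
- by move=> f [].
- by split; [exact: CP0|].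
- move=> f g [Pf f0] [Pg g0]; split; first exact: CPD.
  by move=> x Ax; rewrite /= f0 // g0 // addr0.
- move=> f [Pf f0]; split; first exact: CPN.
  by move=> x Ax; rewrite f0 // oppr0.
- move=> f g Pg [Pf f0]; split; first exact: CPM.
  by move=> x Ax; rewrite /= f0 // mulr0.
Qed.

Lemma vanishing_idealS A B :
  A `<=` B -> vanishing_ideal B `<=` vanishing_ideal A.
Proof. by move=> AB f [Pf f0]; split => // x /AB; exact: f0. Qed.

Definition ideal_support (J : set (X -> R)) : set X :=
  [set x | exists2 h, J h & h x != 0].

Lemma ideal_supportS {J K : set (X -> R)} :
  J `<=` K -> ideal_support J `<=` ideal_support K.
Proof. by move=> JK x [h Jh hx]; exists h => //; exact: JK. Qed.

Lemma CP_ideal_finitely_supported {J : set (X -> R)} (s : seq X) {f} :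
  CP_ideal P J -> (forall x, f x != 0 -> x \in s) ->
  [set x | f x != 0] `<=` ideal_support J -> J f.
Proof.
case=> _ J0 JD _ JM; elim: s f => [|a s IH] f fs fJ.
  suff -> : f = (fun=> 0) by [].
  by apply/funext => x; case: (eqVneq (f x) 0) => // /fs.
have -> : f = (f \- spike a (f a)) \+ spike a (f a).
  by apply/funext => x /=; rewrite subrK.
apply: JD.
  apply: IH => x; rewrite /spike /=; have [->|xa] := eqVneq x a;
    rewrite ?subrr ?eqxx // subr0.
  - by move=> /fs; rewrite inE (negbTE xa).
  - exact: fJ.
have [fa0|fa] := eqVneq (f a) 0.
  suff -> : spike a (f a) = (fun=> 0) by [].
  by apply/funext => x; rewrite /spike fa0; case: ifP.
have [h Jh ha] := fJ a fa.
have -> : spike a (f a) = spike a (f a / h a) \* h.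
  apply/funext => x; rewrite /spike /=.
  by case: eqVneq => [->|_]; rewrite ?divfK ?mul0r.
exact: JM (CP_spike _ _) Jh.
Qed.

Lemma CP_artinian_finite : @CP_artinian X R P -> finite_set [set: X].
Proof.
move=> artinian; apply: contrapT => infX.
have [fresh freshP] := choice (fun s => infinite_setT_fresh s infX).
pose s n := iter n (fun t => fresh t :: t) [::].
pose I n := vanishing_ideal [set` s n].
have decI n : I n.+1 `<=` I n.
  by apply: vanishing_idealS => x /= xs; rewrite inE xs orbT.
have [N stableI] := artinian I (fun n => vanishing_ideal_CP_ideal _) decI.
pose a := fresh (s N).
have INa : I N (spike a 1).
  split; first exact: CP_spike.
  move=> x /= xs; rewrite /spike; have [xa|//] := eqVneq x a.
  by move: (freshP (s N)); rewrite -/a -xa xs.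
move: INa; rewrite -(stableI N.+1 (leqnSn N)) => -[_ /(_ a (mem_head _ _))].
by rewrite /spike eqxx => /eqP; rewrite oner_eq0.
Qed.

Lemma finite_CP_artinian : finite_set [set: X] -> @CP_artinian X R P.
Proof.
move=> finX I idealI decI.
have [N stable_supp] :=
  finite_nonincreasing_set_stable finX (fun n => ideal_supportS (decI n)).
have [s sX] := (finite_seqP _).1 finX.
exists N => n Nn; apply/seteqP; split.
  exact: (nonincreasing_setS decI _ _ Nn).
move=> f INf; apply: (CP_ideal_finitely_supported s (idealI n)).
  by move=> x _; have : [set` s] x by rewrite -sX.
by move=> x fx; rewrite stable_supp //; exists f.
Qed.

End IdealsOfCP.

Theorem corollary5p10 (R : realType) (X : topologicalType)
  (P : set (set X)) :
  @accessible_space X ->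
  closed_ideal P ->
  (forall x : X, P [set x]) ->
  (@CP_artinian X R P <-> finite_set [set: X]).
Proof.
move=> accX idealP P_set1.
by split; [exact: CP_artinian_finite | exact: finite_CP_artinian].
Qed.
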